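(* Let $X$ be a set and $\mathcal{T}$ a topology on $X$. There exists a surjection $f:\mathcal{P}(X)\to\{-1,0,1\}$ satisfying $f(A)+f(B)=f(A\cup B)+f(A\cap B)$ for all $A,B\subseteq X$, such that $\mathcal{T}=\{\varnothing,X\}\cup f^{-1}(1)$ or $\mathcal{T}=\{\varnothing,X\}\cup f^{-1}(-1)$, if and only if $\mathcal{T}$ has one of the following forms: (Form 1) there exist $a\in X$ and an ultrafilter $\mathcal{F}'$ on $X\setminus\{a\}$ such that $\mathcal{T}=\{\varnothing,X\}\cup\mathcal{F}'$ or $\mathcal{T}=\{\varnothing,X\}\cup\{\{a\}\cup F: F\in\mathcal{F}'\}$; (Form 2) there exist $A\subseteq X$ and free ultrafilters $\mathcal{F}'$ on $A$ and $\mathcal{F}''$ on $X\setminus A$ such that $\mathcal{T}=\{\varnothing,X\}\cup\{F'\cup F'': F'\in\mathcal{F}',\,F''\in\mathcal{F}''\}$; (Form 3) there exist $a\ne b$ in $X$ such that $\mathcal{T}=\{\varnothing,X\}\cup\mathcal{P}(X\setminus\{a,b\})$.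
   Context: $\mathcal{P}(Y)$ denotes the power set of $Y$. An ultrafilter on a set $Y$ is a maximal proper filter of subsets of $Y$; it is free if the intersection of all its members is empty. *)

From Stdlib Require Import ZArith.

Section D.
Context {X : Type}.

Definition set_empty (U : X -> Prop) : Prop := forall x, ~ U x.
Definition set_full (U : X -> Prop) : Prop := forall x, U x.
Definition subset (U V : X -> Prop) : Prop := forall x, U x -> V x.
Definition set_eq (U V : X -> Prop) : Prop := forall x, U x <-> V x.
Definition union (U V : X -> Prop) : X -> Prop := fun x => U x \/ V x.
Definition inter (U V : X -> Prop) : X -> Prop := fun x => U x /\ V x.

Definition is_topology (T : (X -> Prop) -> Prop) : Prop :=
  T (fun _ => False) /\ T (fun _ => True) /\
  (forall S : (X -> Prop) -> Prop, (forall U, S U -> T U) ->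
      T (fun x => exists U, S U /\ U x)) /\
  (forall U V, T U -> T V -> T (inter U V)).

Definition proper_filter_on (Y : X -> Prop) (F : (X -> Prop) -> Prop) : Prop :=
  (forall U, F U -> subset U Y) /\
  F Y /\
  ~ F (fun _ => False) /\
  (forall U V, F U -> subset U V -> subset V Y -> F V) /\
  (forall U V, F U -> F V -> F (inter U V)).

Definition ultrafilter_on (Y : X -> Prop) (F : (X -> Prop) -> Prop) : Prop :=
  proper_filter_on Y F /\
  forall G, proper_filter_on Y G -> (forall U, F U -> G U) -> forall U, G U -> F U.

Definition free_family (F : (X -> Prop) -> Prop) : Prop :=
  forall x, exists U, F U /\ ~ U x.

End D.

(* For a modular [f], [B ↦ f B - f ∅] is a finitely additive measure, and
   replacing [f] by [-f] we may assume [T = {∅, X} ∪ f⁻¹(1)]. The value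
   [f ∅ ∈ {-1, 0, 1}] then fixes the shape of [T]:
   - [f ∅ = -1]: the measure is monotone and {0,1,2}-valued. If some point
     has measure 1, the subsets of measure one of its complement form an
     ultrafilter (Form 1, with the point); otherwise all points are null and
     a set of value 0 and its complement carry free ultrafilters (Form 2).
   - [f ∅ = 0]: openness of unions forces a point [a] of value [-1]; the
     subsets of [X \ {a}] of measure one are an ultrafilter (Form 1).
   - [f ∅ = 1]: the measure is antitone; the points of value 1 form an open
     set, whose complement has measure -2 and hence exactly two points
     (Form 3).
   Conversely each form is realized by a signed sum of indicators of prime
   filters: traces of the given ultrafilters and evaluations at points. *)

From Stdlib Require Import ZArith Lia Classical ClassicalEpsilon.
From Stdlib Require Import FunctionalExtensionality PropExtensionality.
Open Scope Z_scope.

Notation set0 := (fun _ => False).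
Notation setT := (fun _ => True).
Notation setC A := (fun x => ~ A x).
Notation setD A B := (fun x => A x /\ ~ B x).
Notation set1 a := (fun x => x = a).

(* These notations leave beta-redexes under [f] that [lia] would otherwise
   treat as atoms distinct from their reducts. *)
Ltac blia := cbv beta in *; lia.

Lemma set_ext {X : Type} (U V : X -> Prop) : set_eq U V -> U = V.
Proof.
  intros H; apply functional_extensionality; intro x.
  apply propositional_extensionality, H.
Qed.

Section SetFunctions.
Context {X : Type}.

Lemma inhabited_of_neq_empty (g : (X -> Prop) -> Z) U : g U <> g set0 -> exists x, U x.
Proof.
  intros HU; apply NNPP; intro Hno; apply HU; f_equal.
  apply set_ext; intro x; split; [intro Ux; apply Hno; exists x; exact Ux | tauto].
Qed.

Lemma not_full_of_neq_full (g : (X -> Prop) -> Z) U : g U <> g setT -> exists x, ~ U x.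
Proof.
  intros HU; apply NNPP; intro Hno; apply HU; f_equal.
  apply set_ext; intro x; split; [tauto | intros _; apply NNPP; intro nUx; apply Hno; eauto].
Qed.

Definition modular (g : (X -> Prop) -> Z) : Prop :=
  forall A B, g A + g B = g (union A B) + g (inter A B).

Definition ternary (g : (X -> Prop) -> Z) : Prop :=
  forall A, g A = -1 \/ g A = 0 \/ g A = 1.

Variable f : (X -> Prop) -> Z.
Hypothesis f_modular : modular f.

Lemma modular_disjoint A B :
  (forall x, A x -> ~ B x) -> f (union A B) = f A + f B - f set0.
Proof.
  intros HAB; pose proof (f_modular A B) as h.
  replace (inter A B) with (fun _ : X => False) in h; [lia |].
  apply set_ext; intro x; unfold inter; firstorder.
Qed.

Lemma modular_split A Y : f A = f (inter A Y) + f (setD A Y) - f set0.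
Proof.
  rewrite <- modular_disjoint by (unfold inter; tauto).
  f_equal; apply set_ext; intro x; unfold union, inter.
  destruct (classic (Y x)); tauto.
Qed.

Lemma modular_subset B C : subset B C -> f C = f B + f (setD C B) - f set0.
Proof.
  intros HBC; rewrite (modular_split C B).
  replace (inter C B) with B; [lia |].
  apply set_ext; intro x; unfold inter; firstorder.
Qed.

Lemma modular_compl A : f A + f (setC A) = f setT + f set0.
Proof.
  rewrite (modular_subset A setT) by (intros x _; exact I).
  replace (setD setT A) with (setC A); [lia |].
  apply set_ext; intro x; tauto.
Qed.

Lemma modular_remove_point U x :
  U x -> f (setD U (set1 x)) = f U - f (set1 x) + f set0.
Proof.
  intros Ux; rewrite (modular_subset (set1 x) U); [lia |].
  intros y e; subst y; exact Ux.
Qed.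

Lemma modular_two_points S :
  (forall B C, subset B C -> f C <= f B) ->
  f S = f set0 - 2 -> (forall x, S x -> f (set1 x) = f set0 - 1) ->
  exists a b, a <> b /\ forall x, S x <-> x = a \/ x = b.
Proof.
  intros Hanti HS Hpt.
  destruct (inhabited_of_neq_empty f S) as [a Sa]; [lia |].
  assert (HS1 : f (setD S (set1 a)) = f set0 - 1)
    by (rewrite (modular_remove_point _ _ Sa), (Hpt a Sa); lia).
  destruct (inhabited_of_neq_empty f (setD S (set1 a))) as [b [Sb nba]]; [blia |].
  assert (HS2 : f (setD (setD S (set1 a)) (set1 b)) = f set0)
    by (rewrite (modular_remove_point _ b (conj Sb nba)), HS1, (Hpt b Sb); lia).
  exists a, b; split; [intros e; subst b; exact (nba eq_refl) |].
  intros x; split.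
  - intros Sx; apply NNPP; intros Hx.
    assert (Hsub : subset (set1 x) (setD (setD S (set1 a)) (set1 b)))
      by (intros y e; subst y; tauto).
    pose proof (Hanti _ _ Hsub); pose proof (Hpt x Sx); lia.
  - intros [e | e]; subst x; [exact Sa | exact Sb].
Qed.

Lemma modular_monotone B C :
  (forall A, f set0 <= f A) -> subset B C -> f B <= f C.
Proof.
  intros Hmin HBC; rewrite (modular_subset B C HBC).
  pose proof (Hmin (setD C B)); lia.
Qed.

Lemma modular_antitone B C :
  (forall A, f A <= f set0) -> subset B C -> f C <= f B.
Proof.
  intros Hmax HBC; rewrite (modular_subset B C HBC).
  pose proof (Hmax (setD C B)); lia.
Qed.

Definition mass_one (Y : X -> Prop) : (X -> Prop) -> Prop :=
  fun B => subset B Y /\ f B - f set0 = 1.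

Lemma mass_one_ultrafilter Y :
  (forall B, subset B Y -> f B - f set0 = 0 \/ f B - f set0 = 1) ->
  f Y - f set0 = 1 -> ultrafilter_on Y (mass_one Y).
Proof.
  intros H01 HY.
  split; [split; [| split; [| split; [| split]]] |].
  - intros U [HU _]; exact HU.
  - split; [intros x h; exact h | exact HY].
  - intros [_ h]; lia.
  - intros U V [HU HfU] HUV HVY; split; [exact HVY |].
    pose proof (modular_subset U V HUV).
    pose proof (H01 (setD V U) (fun x '(conj h _) => HVY x h)).
    pose proof (H01 V HVY); lia.
  - intros U V [HU HfU] [HV HfV].
    assert (HI : subset (inter U V) Y) by (intros x [h _]; auto).
    assert (HD : subset (union U V) Y) by (intros x [h | h]; auto).
    split; [exact HI |].
    pose proof (f_modular U V); pose proof (H01 _ HI); pose proof (H01 _ HD); lia.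
  - intros G [G_sub [_ [G_proper [_ G_inter]]]] HFG U HGU.
    assert (HU : subset U Y) by exact (G_sub U HGU).
    split; [exact HU |].
    destruct (H01 U HU) as [h | h]; [exfalso | exact h].
    assert (HGD : G (setD Y U)).
    { apply HFG; split; [intros x [hx _]; exact hx |].
      rewrite (modular_subset U Y HU) in HY; lia. }
    apply G_proper.
    replace (fun _ : X => False) with (inter U (setD Y U)); [exact (G_inter _ _ HGU HGD) |].
    apply set_ext; intro x; unfold inter; tauto.
Qed.

Lemma mass_one_free Y :
  (forall x, f (set1 x) = f set0) -> f Y - f set0 = 1 -> free_family (mass_one Y).
Proof.
  intros Hpts HY x; destruct (classic (Y x)) as [Yx | nYx].
  - exists (setD Y (set1 x)); split; [split |].
    + intros y [h _]; exact h.
    + assert (Hx : subset (set1 x) Y) by (intros y e; subst; exact Yx).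
      rewrite (modular_subset _ _ Hx), Hpts in HY; lia.
    + tauto.
  - exists Y; split; [split; [intros y h; exact h | exact HY] | exact nYx].
Qed.

End SetFunctions.

Section Ultrafilters.
Context {X : Type} (Y : X -> Prop) (F : (X -> Prop) -> Prop).
Hypothesis F_ultra : ultrafilter_on Y F.

Lemma ultrafilter_sub U : F U -> subset U Y.
Proof. destruct F_ultra as [[h _] _]; exact (h U). Qed.

Lemma ultrafilter_top : F Y.
Proof. destruct F_ultra as [[_ [h _]] _]; exact h. Qed.

Lemma ultrafilter_superset U V : F U -> subset U V -> subset V Y -> F V.
Proof. destruct F_ultra as [[_ [_ [_ [h _]]]] _]; exact (h U V). Qed.

Lemma ultrafilter_inter U V : F U -> F V -> F (inter U V).
Proof. destruct F_ultra as [[_ [_ [_ [_ h]]]] _]; exact (h U V). Qed.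

Lemma ultrafilter_inhabited U : F U -> exists x, U x.
Proof.
  intros HU; apply NNPP; intro Hno.
  destruct F_ultra as [[_ [_ [F_proper _]]] _]; apply F_proper.
  replace (fun _ : X => False) with U; [exact HU |].
  apply set_ext; intro x; split; [intro Ux; apply Hno; eauto | tauto].
Qed.

(* Maximality: otherwise the sets meeting [U] in a member of [F] would form a
   strictly larger proper filter. *)
Lemma ultrafilter_prime U : subset U Y -> F U \/ F (setD Y U).
Proof.
  intros HU; destruct (classic (F (setD Y U))) as [h | h]; [right; exact h | left].
  destruct F_ultra as [[F1 [F2 [_ [F4 F5]]]] Hmax].
  apply (Hmax (fun V => subset V Y /\ exists W, F W /\ subset (inter W U) V)).
  - split; [| split; [| split; [| split]]].
    + intros V [hV _]; exact hV.
    + split; [intros x hx; exact hx |].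
      exists Y; split; [exact F2 | intros x [hx _]; exact hx].
    + intros [_ [W [HW HWU]]]; apply h, (F4 W); [exact HW | | intros x [hx _]; exact hx].
      intros x Wx; split; [exact (F1 W HW x Wx) | intro Ux; exact (HWU x (conj Wx Ux))].
    + intros V V' [_ [W [HW HWU]]] HVV' HV'; split; [exact HV' |].
      exists W; split; [exact HW | intros x hx; exact (HVV' x (HWU x hx))].
    + intros V V' [hV [W [HW HWU]]] [_ [W' [HW' HWU']]].
      split; [intros x [hx _]; exact (hV x hx) |].
      exists (inter W W'); split; [exact (F5 W W' HW HW') |].
      intros x [[Wx W'x] Ux]; split; [apply HWU | apply HWU']; split; assumption.
  - intros V HV; split; [exact (F1 V HV) |].
    exists V; split; [exact HV | intros x [hx _]; exact hx].
  - split; [exact HU |]; exists Y; split; [exact F2 | intros x [_ hx]; exact hx].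
Qed.

Lemma ultrafilter_union U V :
  subset U Y -> subset V Y -> (F (union U V) <-> F U \/ F V).
Proof.
  intros HU HV; split.
  - intros HUV; apply NNPP; intro Hno.
    destruct (ultrafilter_prime U HU) as [h | hU]; [tauto |].
    destruct (ultrafilter_prime V HV) as [h | hV]; [tauto |].
    destruct (ultrafilter_inhabited _ (ultrafilter_inter _ _ HUV (ultrafilter_inter _ _ hU hV)))
      as [x [[Ux | Vx] [[_ nUx] [_ nVx]]]]; auto.
  - assert (HUVY : subset (union U V) Y) by (intros x [h | h]; auto).
    intros [h | h]; eapply ultrafilter_superset; eauto; intros x hx; unfold union; auto.
Qed.

Lemma ultrafilter_trace_empty B : (forall x, B x -> ~ Y x) -> ~ F (inter B Y).
Proof.
  intros HB h; destruct (ultrafilter_inhabited _ h) as [x [Bx Yx]].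
  exact (HB x Bx Yx).
Qed.

Lemma ultrafilter_trace_top B : subset Y B -> F (inter B Y).
Proof.
  intros HB; apply (ultrafilter_superset Y); [exact ultrafilter_top | |].
  - intros x Yx; split; [exact (HB x Yx) | exact Yx].
  - intros x [_ Yx]; exact Yx.
Qed.

End Ultrafilters.

(* A lattice homomorphism from subsets of [X] to [Prop]: a prime filter that
   may be empty or improper. *)
Definition prime_filter {X : Type} (P : (X -> Prop) -> Prop) : Prop :=
  forall A B, (P (union A B) <-> P A \/ P B) /\ (P (inter A B) <-> P A /\ P B).

Definition ind (P : Prop) : Z := if excluded_middle_informative P then 1 else 0.

Lemma ind_true (P : Prop) : P -> ind P = 1.
Proof. unfold ind; destruct (excluded_middle_informative P); tauto. Qed.

Lemma ind_false (P : Prop) : ~ P -> ind P = 0.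
Proof. unfold ind; destruct (excluded_middle_informative P); tauto. Qed.

Lemma ind_cases (P : Prop) : (P /\ ind P = 1) \/ (~ P /\ ind P = 0).
Proof. unfold ind; destruct (excluded_middle_informative P); tauto. Qed.

Lemma ind_bounds (P : Prop) : 0 <= ind P <= 1.
Proof. destruct (ind_cases P) as [[_ e] | [_ e]]; lia. Qed.

Lemma ind_sub_eq1 (P Q : Prop) : ind P - ind Q = 1 <-> P /\ ~ Q.
Proof.
  destruct (ind_cases P) as [[? ?] | [? ?]];
  destruct (ind_cases Q) as [[? ?] | [? ?]]; split; (intros [? ?] || intro); tauto || lia.
Qed.

Lemma ind_add_sub1_eq1 (P Q : Prop) : ind P + ind Q - 1 = 1 <-> P /\ Q.
Proof.
  destruct (ind_cases P) as [[? ?] | [? ?]];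
  destruct (ind_cases Q) as [[? ?] | [? ?]]; split; (intros [? ?] || intro); tauto || lia.
Qed.

Lemma one_sub_ind_sub_eq1 (P Q : Prop) : 1 - ind P - ind Q = 1 <-> ~ P /\ ~ Q.
Proof.
  destruct (ind_cases P) as [[? ?] | [? ?]];
  destruct (ind_cases Q) as [[? ?] | [? ?]]; split; (intros [? ?] || intro); tauto || lia.
Qed.

Lemma prime_filter_ind_modular {X : Type} (P : (X -> Prop) -> Prop) :
  prime_filter P -> modular (fun A => ind (P A)).
Proof.
  intros HP A B; destruct (HP A B) as [HU HI].
  destruct (ind_cases (P A)) as [[? ?] | [? ?]];
  destruct (ind_cases (P B)) as [[? ?] | [? ?]];
  destruct (ind_cases (P (union A B))) as [[? ?] | [? ?]];
  destruct (ind_cases (P (inter A B))) as [[? ?] | [? ?]]; tauto || lia.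
Qed.

Lemma prime_filter_point {X : Type} (a : X) : prime_filter (fun A => A a).
Proof. intros A B; unfold union, inter; tauto. Qed.

Lemma prime_filter_trace {X : Type} (Y : X -> Prop) F :
  ultrafilter_on Y F -> prime_filter (fun A => F (inter A Y)).
Proof.
  intros HF A B; split.
  - replace (inter (union A B) Y) with (union (inter A Y) (inter B Y)).
    + apply (ultrafilter_union Y F HF); intros x [_ h]; exact h.
    + apply set_ext; intro x; unfold union, inter; tauto.
  - split.
    + intros h; split; eapply (ultrafilter_superset Y F HF); try exact h;
        intros x; unfold inter; tauto.
    + intros [hA hB].
      replace (inter (inter A B) Y) with (inter (inter A Y) (inter B Y));
        [exact (ultrafilter_inter Y F HF _ _ hA hB) |].
      apply set_ext; intro x; unfold inter; tauto.
Qed.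

Section Forms.
Context {X : Type}.

Definition trivialU (T P : (X -> Prop) -> Prop) : Prop :=
  forall U, T U <-> set_empty U \/ set_full U \/ P U.

Lemma trivialU_ext T P Q : trivialU T P -> (forall U, P U <-> Q U) -> trivialU T Q.
Proof. intros HT HPQ U; rewrite (HT U), (HPQ U); tauto. Qed.

Definition form1 T : Prop :=
  exists (a : X) (F' : (X -> Prop) -> Prop),
    ultrafilter_on (fun x => x <> a) F' /\
    (trivialU T F' \/
     trivialU T (fun U => exists F, F' F /\ set_eq U (union (fun x => x = a) F))).

Definition form2 T : Prop :=
  exists (A : X -> Prop) (F' F'' : (X -> Prop) -> Prop),
    ultrafilter_on A F' /\ free_family F' /\
    ultrafilter_on (fun x => ~ A x) F'' /\ free_family F'' /\
    trivialU T (fun U => exists G H, F' G /\ F'' H /\ set_eq U (union G H)).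

Definition form3 T : Prop :=
  exists a b : X, a <> b /\ trivialU T (fun U => subset U (fun x => x <> a /\ x <> b)).

Definition realizes T (f : (X -> Prop) -> Z) : Prop :=
  ternary f /\
  (exists A, f A = -1) /\ (exists A, f A = 0) /\ (exists A, f A = 1) /\
  modular f /\ trivialU T (fun U => f U = 1).

End Forms.

Lemma open_of_local {X : Type} (T : (X -> Prop) -> Prop) (U : X -> Prop) :
  is_topology T -> (forall x, U x -> exists V, T V /\ subset V U /\ V x) -> T U.
Proof.
  intros [_ [_ [T_union _]]] Hloc.
  replace U with (fun x => exists V, (T V /\ subset V U) /\ V x).
  - apply T_union; intros V [HV _]; exact HV.
  - apply set_ext; intro x; split.
    + intros [V [[_ HVU] Vx]]; exact (HVU x Vx).
    + intros Ux; destruct (Hloc x Ux) as [V [HV [HVU Vx]]]; eauto.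
Qed.

Section Realizers.
Context {X : Type} (T : (X -> Prop) -> Prop).

Lemma realizes_form1_filter a F' :
  ultrafilter_on (fun x => x <> a) F' -> trivialU T F' ->
  exists f, realizes T f.
Proof.
  intros HF HT.
  set (Y := fun x : X => x <> a).
  exists (fun A => ind (F' (inter A Y)) - ind (A a)).
  split; [| split; [| split; [| split; [| split]]]].
  - intros A; pose proof (ind_bounds (F' (inter A Y))); pose proof (ind_bounds (A a)); lia.
  - exists (set1 a); rewrite ind_false, ind_true; [lia | reflexivity |].
    apply (ultrafilter_trace_empty _ _ HF); intros x e; subst x; tauto.
  - exists set0; rewrite !ind_false; [lia | tauto |].
    apply (ultrafilter_trace_empty _ _ HF); tauto.
  - exists Y; rewrite ind_true, ind_false; [lia | unfold Y; tauto |].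
    apply (ultrafilter_trace_top _ _ HF); intros x h; exact h.
  - intros A B.
    pose proof (prime_filter_ind_modular _ (prime_filter_trace Y F' HF) A B).
    pose proof (prime_filter_ind_modular _ (prime_filter_point a) A B); blia.
  - apply trivialU_ext with (1 := HT); intro U; rewrite ind_sub_eq1; split.
    + intros HU; pose proof (ultrafilter_sub Y F' HF U HU) as HUY; split.
      * apply (ultrafilter_superset Y F' HF U); [exact HU | | intros x [_ h]; exact h].
        intros x Ux; split; [exact Ux | exact (HUY x Ux)].
      * intros Ua; exact (HUY a Ua eq_refl).
    + intros [HU nUa]; apply (ultrafilter_superset Y F' HF _ _ HU); [intros x [h _]; exact h |].
      intros x Ux e; subst x; exact (nUa Ux).
Qed.

Lemma realizes_form1_point a F' :
  ultrafilter_on (fun x => x <> a) F' ->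
  trivialU T (fun U => exists F, F' F /\ set_eq U (union (fun x => x = a) F)) ->
  exists f, realizes T f.
Proof.
  intros HF HT.
  set (Y := fun x : X => x <> a).
  exists (fun A => ind (F' (inter A Y)) + ind (A a) - 1).
  split; [| split; [| split; [| split; [| split]]]].
  - intros A; pose proof (ind_bounds (F' (inter A Y))); pose proof (ind_bounds (A a)); lia.
  - exists set0; rewrite !ind_false; [lia | tauto |].
    apply (ultrafilter_trace_empty _ _ HF); tauto.
  - exists (set1 a); rewrite ind_false, ind_true; [lia | reflexivity |].
    apply (ultrafilter_trace_empty _ _ HF); intros x e; subst x; tauto.
  - exists setT; rewrite !ind_true; [lia | exact I |].
    apply (ultrafilter_trace_top _ _ HF); intros x _; exact I.
  - intros A B.
    pose proof (prime_filter_ind_modular _ (prime_filter_trace Y F' HF) A B).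
    pose proof (prime_filter_ind_modular _ (prime_filter_point a) A B); blia.
  - apply trivialU_ext with (1 := HT); intro U.
    rewrite ind_add_sub1_eq1; split.
    + intros [F [HF' HU]]; split.
      * apply (ultrafilter_superset Y F' HF F); [exact HF' | | intros x [_ h]; exact h].
        intros x Fx; split; [apply HU; right; exact Fx |].
        exact (ultrafilter_sub Y F' HF F HF' x Fx).
      * apply HU; left; reflexivity.
    + intros [HU Ua]; exists (inter U Y); split; [exact HU |].
      intro x; unfold union, inter, Y; split.
      * intros Ux; destruct (classic (x = a)); tauto.
      * intros [e | [Ux _]]; [subst x; exact Ua | exact Ux].
Qed.

Lemma realizes_form2 A0 F' F'' :
  ultrafilter_on A0 F' -> ultrafilter_on (fun x => ~ A0 x) F'' ->
  trivialU T (fun U => exists G H, F' G /\ F'' H /\ set_eq U (union G H)) ->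
  exists f, realizes T f.
Proof.
  intros HF1 HF2 HT.
  exists (fun A => ind (F' (inter A A0)) + ind (F'' (inter A (setC A0))) - 1).
  split; [| split; [| split; [| split; [| split]]]].
  - intros A; pose proof (ind_bounds (F' (inter A A0)));
      pose proof (ind_bounds (F'' (inter A (setC A0)))); lia.
  - exists set0; rewrite !ind_false; [lia | |].
    + apply (ultrafilter_trace_empty _ _ HF2); tauto.
    + apply (ultrafilter_trace_empty _ _ HF1); tauto.
  - exists A0; rewrite ind_true, ind_false; [lia | |].
    + apply (ultrafilter_trace_empty _ _ HF2); tauto.
    + apply (ultrafilter_trace_top _ _ HF1); intros x h; exact h.
  - exists setT; rewrite !ind_true; [lia | |].
    + apply (ultrafilter_trace_top _ _ HF2); intros x _; exact I.
    + apply (ultrafilter_trace_top _ _ HF1); intros x _; exact I.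
  - intros A B.
    pose proof (prime_filter_ind_modular _ (prime_filter_trace _ F' HF1) A B).
    pose proof (prime_filter_ind_modular _ (prime_filter_trace _ F'' HF2) A B); blia.
  - apply trivialU_ext with (1 := HT); intro U.
    rewrite ind_add_sub1_eq1; split.
    + intros [G [H [HG [HH HU]]]].
      pose proof (ultrafilter_sub _ F' HF1 G HG) as HGA.
      pose proof (ultrafilter_sub _ F'' HF2 H HH) as HHA.
      split.
      * apply (ultrafilter_superset _ F' HF1 G); [exact HG | | intros x [_ h]; exact h].
        intros x Gx; split; [apply HU; left; exact Gx | exact (HGA x Gx)].
      * apply (ultrafilter_superset _ F'' HF2 H); [exact HH | | intros x [_ h]; exact h].
        intros x Hx; split; [apply HU; right; exact Hx | exact (HHA x Hx)].
    + intros [HG HH]; exists (inter U A0), (inter U (setC A0)); split; [exact HG |].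
      split; [exact HH |].
      intro x; unfold union, inter; destruct (classic (A0 x)); tauto.
Qed.

Lemma realizes_form3 a b :
  a <> b -> trivialU T (fun U => subset U (fun x => x <> a /\ x <> b)) ->
  exists f, realizes T f.
Proof.
  intros hab HT.
  exists (fun A => 1 - ind (A a) - ind (A b)).
  split; [| split; [| split; [| split; [| split]]]].
  - intros A; pose proof (ind_bounds (A a)); pose proof (ind_bounds (A b)); lia.
  - exists (fun x => x = a \/ x = b); rewrite !ind_true; [lia | right | left]; reflexivity.
  - exists (set1 a); rewrite ind_true, ind_false; [lia | | reflexivity].
    intros e; exact (hab (eq_sym e)).
  - exists set0; rewrite ind_false by tauto; lia.
  - intros A B.
    pose proof (prime_filter_ind_modular _ (prime_filter_point a) A B).
    pose proof (prime_filter_ind_modular _ (prime_filter_point b) A B); blia.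
  - apply trivialU_ext with (1 := HT); intro U.
    rewrite one_sub_ind_sub_eq1; split.
    + intros HU; split; intros Ux; destruct (HU _ Ux); tauto.
    + intros [nUa nUb] x Ux; split; intros e; subst x; tauto.
Qed.

End Realizers.

Section Classification.
Context {X : Type} (T : (X -> Prop) -> Prop) (f : (X -> Prop) -> Z).
Hypotheses (T_top : is_topology T) (f_ternary : ternary f) (f_modular : modular f)
  (T_eq : trivialU T (fun U => f U = 1)).

Lemma open_of_points U : (forall x, U x -> f (set1 x) = 1) -> T U.
Proof.
  intros HU; apply open_of_local; [exact T_top |]; intros x Ux.
  exists (set1 x); split; [apply T_eq; right; right; exact (HU x Ux) |].
  split; [intros y e; subst y; exact Ux | reflexivity].
Qed.

Lemma set1_sub (U : X -> Prop) x : U x -> subset (set1 x) U.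
Proof. intros Ux y e; subst y; exact Ux. Qed.

Section EmptyValueNeg.
Hypotheses (f_empty : f set0 = -1) (f_onto1 : exists A, f A = 1).

Lemma monotone_of_empty_neg B C : subset B C -> f B <= f C.
Proof.
  apply modular_monotone; [exact f_modular |].
  intros A; pose proof (f_ternary A); blia.
Qed.

Lemma full_value_of_empty_neg : f setT = 1.
Proof.
  destruct f_onto1 as [A HA].
  pose proof (monotone_of_empty_neg A setT (fun _ _ => I)); pose proof (f_ternary setT); blia.
Qed.

Lemma form1_of_point_value0 a : f (set1 a) = 0 -> form1 T.
Proof.
  intros Ha.
  assert (Hle : forall B, subset B (setC (set1 a)) -> f B <= 0).
  { intros B HB.
    pose proof (modular_disjoint f f_modular B (set1 a) (fun x Bx e => HB x Bx e)).
    pose proof (f_ternary (union B (set1 a))); blia. }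
  assert (HY : f (setC (set1 a)) = 0)
    by (pose proof (modular_compl f f_modular (set1 a)); pose proof full_value_of_empty_neg; blia).
  exists a, (mass_one f (setC (set1 a))); split.
  { apply mass_one_ultrafilter; [exact f_modular | | blia].
    intros B HB; pose proof (Hle B HB); pose proof (f_ternary B); blia. }
  right; apply trivialU_ext with (1 := T_eq); intro U; split.
  - intros HU.
    assert (Ua : U a).
    { apply NNPP; intro nUa.
      assert (HUY : subset U (setC (set1 a))) by (intros x Ux e; subst x; exact (nUa Ux)).
      pose proof (Hle U HUY); blia. }
    exists (setD U (set1 a)); split; [split |].
    + intros x [_ h]; exact h.
    + pose proof (modular_subset f f_modular _ _ (set1_sub U a Ua)); blia.
    + intro x; unfold union; destruct (classic (x = a)); [subst x |]; tauto.
  - intros [F [[HFY HF] HU]]; rewrite (set_ext _ _ HU).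
    rewrite modular_disjoint by (exact f_modular || intros x e Fx; exact (HFY x Fx e)).
    lia.
Qed.

Lemma form2_of_no_point_value0 :
  (forall x, f (set1 x) <> 0) -> (exists A, f A = 0) -> form2 T.
Proof.
  intros Hpts [A0 HA0].
  assert (HcA0 : f (setC A0) = 0)
    by (pose proof (modular_compl f f_modular A0); pose proof full_value_of_empty_neg; blia).
  assert (Hpt : forall x, f (set1 x) = f set0).
  { intros x; destruct (f_ternary (set1 x)) as [h | [h | h]];
      [lia | exfalso; exact (Hpts x h) | exfalso].
    destruct (classic (A0 x)) as [Ax | nAx].
    - pose proof (monotone_of_empty_neg _ _ (set1_sub A0 x Ax)); blia.
    - pose proof (monotone_of_empty_neg _ _ (set1_sub (setC A0) x nAx)); blia. }
  assert (H01 : forall Y, f Y = 0 -> forall B, subset B Y -> f B - f set0 = 0 \/ f B - f set0 = 1).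
  { intros Y HY B HB; pose proof (monotone_of_empty_neg _ _ HB); pose proof (f_ternary B); blia. }
  exists A0, (mass_one f A0), (mass_one f (setC A0)).
  split; [apply mass_one_ultrafilter; [exact f_modular | exact (H01 A0 HA0) | blia] |].
  split; [apply mass_one_free; [exact f_modular | exact Hpt | blia] |].
  split; [apply mass_one_ultrafilter; [exact f_modular | exact (H01 _ HcA0) | blia] |].
  split; [apply mass_one_free; [exact f_modular | exact Hpt | blia] |].
  apply trivialU_ext with (1 := T_eq); intro U; split.
  - intros HU.
    assert (HG : subset (inter U A0) A0) by (intros x [_ h]; exact h).
    assert (HH : subset (setD U A0) (setC A0)) by (intros x [_ h]; exact h).
    pose proof (modular_split f f_modular U A0).
    pose proof (monotone_of_empty_neg _ _ HG); pose proof (monotone_of_empty_neg _ _ HH).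
    exists (inter U A0), (setD U A0).
    split; [split; [exact HG | blia] |]; split; [split; [exact HH | blia] |].
    intro x; unfold union, inter; destruct (classic (A0 x)); tauto.
  - intros [G [H [[HGA HG] [[HHA HH] HU]]]]; rewrite (set_ext _ _ HU).
    rewrite modular_disjoint by (exact f_modular || intros x Gx Hx; exact (HHA x Hx (HGA x Gx))).
    lia.
Qed.

End EmptyValueNeg.

Section EmptyValueZero.
Hypotheses (f_empty : f set0 = 0)
  (f_onto_neg : exists A, f A = -1) (f_onto1 : exists A, f A = 1).

Lemma full_value_of_empty0 : f setT = 0.
Proof.
  destruct f_onto_neg as [A HA], f_onto1 as [B HB].
  pose proof (modular_compl f f_modular A); pose proof (modular_compl f f_modular B).
  pose proof (f_ternary (setC A)); pose proof (f_ternary (setC B)); blia.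
Qed.

(* Otherwise, for [x0] outside some [A] of value [1], the set [X \ {x0}] is
   open, being covered by [A] and the open sets [A ∪ {y}]; but its value is
   [0]. *)
Lemma exists_point_value_neg : exists a, f (set1 a) = -1.
Proof.
  apply NNPP; intro Hno; destruct f_onto1 as [A HA].
  assert (Hadd : forall y, ~ A y -> f (union A (set1 y)) = 1).
  { intros y nAy.
    pose proof (modular_disjoint f f_modular A (set1 y) (fun x Ax e => nAy (eq_ind x A Ax y e))).
    pose proof (f_ternary (union A (set1 y))); pose proof (f_ternary (set1 y)).
    assert (f (set1 y) <> -1) by (intro e; apply Hno; exists y; exact e); blia. }
  destruct (not_full_of_neq_full f A) as [x0 nAx0]; [rewrite full_value_of_empty0; blia |].
  destruct (inhabited_of_neq_empty f A) as [y0 Ay0]; [lia |].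
  assert (Hopen : T (fun y => y <> x0)).
  { apply open_of_local; [exact T_top |]; intros y ny.
    destruct (classic (A y)) as [Ay | nAy].
    - exists A; split; [apply T_eq; right; right; exact HA |].
      split; [intros z Az e; subst z; exact (nAx0 Az) | exact Ay].
    - exists (union A (set1 y)); split; [apply T_eq; right; right; exact (Hadd y nAy) |].
      split; [intros z [Az | e] e'; subst; [exact (nAx0 Az) | exact (ny eq_refl)] |].
      right; reflexivity. }
  apply T_eq in Hopen; destruct Hopen as [h | [h | h]].
  - apply (h y0); intro e; subst y0; exact (nAx0 Ay0).
  - exact (h x0 eq_refl).
  - pose proof (modular_compl f f_modular (set1 x0)).
    pose proof (Hadd x0 nAx0); pose proof (f_ternary (set1 x0)).
    pose proof (modular_disjoint f f_modular A (set1 x0) (fun x Ax e => nAx0 (eq_ind x A Ax x0 e))).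
    pose proof full_value_of_empty0; blia.
Qed.

Lemma form1_of_empty_value0 : form1 T.
Proof.
  destruct exists_point_value_neg as [a Ha].
  assert (Hge : forall B, subset B (setC (set1 a)) -> 0 <= f B).
  { intros B HB.
    pose proof (modular_disjoint f f_modular B (set1 a) (fun x Bx e => HB x Bx e)).
    pose proof (f_ternary (union B (set1 a))); blia. }
  assert (HY : f (setC (set1 a)) = 1)
    by (pose proof (modular_compl f f_modular (set1 a)); pose proof full_value_of_empty0; blia).
  exists a, (mass_one f (setC (set1 a))); split.
  { apply mass_one_ultrafilter; [exact f_modular | | blia].
    intros B HB; pose proof (Hge B HB); pose proof (f_ternary B); blia. }
  left; apply trivialU_ext with (1 := T_eq); intro U; split.
  - intros HU; split; [| blia]; intros x Ux e; subst x.
    pose proof (modular_subset f f_modular _ _ (set1_sub U a Ux)).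
    pose proof (f_ternary (setD U (set1 a))); blia.
  - intros [_ h]; blia.
Qed.

End EmptyValueZero.

Section EmptyValuePos.
Hypotheses (f_empty : f set0 = 1)
  (f_onto_neg : exists A, f A = -1) (f_onto0 : exists A, f A = 0).

Lemma antitone_of_empty_pos B C : subset B C -> f C <= f B.
Proof.
  apply modular_antitone; [exact f_modular |].
  intros A; pose proof (f_ternary A); blia.
Qed.

Lemma full_value_of_empty_pos : f setT = -1.
Proof.
  destruct f_onto_neg as [A HA].
  pose proof (antitone_of_empty_pos A setT (fun _ _ => I)); pose proof (f_ternary setT); blia.
Qed.

(* A point of value [-1] would lie in a set of value [0] (some [A] or its
   complement), which antitonicity forbids. *)
Lemma point_value_nonneg x : f (set1 x) = 0 \/ f (set1 x) = 1.
Proof.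
  destruct f_onto0 as [A HA].
  destruct (f_ternary (set1 x)) as [h | h]; [exfalso | exact h].
  pose proof (modular_compl f f_modular A); pose proof full_value_of_empty_pos.
  destruct (classic (A x)) as [Ax | nAx].
  - pose proof (antitone_of_empty_pos _ _ (set1_sub A x Ax)); blia.
  - pose proof (antitone_of_empty_pos _ _ (set1_sub (setC A) x nAx)); blia.
Qed.

(* The points of value [1] form an open set [S]. It is not everything (then
   every set would be open, including one of value [0]), so [S = ∅] or
   [f S = 1]; either way [X \ S] has value [-1]. *)
Lemma value_of_nonopen_points : f (fun x => f (set1 x) <> 1) = -1.
Proof.
  assert (HS : T (fun x => f (set1 x) = 1)) by (apply open_of_points; intros x h; exact h).
  pose proof (modular_compl f f_modular (fun x => f (set1 x) = 1)) as Hc.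
  rewrite full_value_of_empty_pos in Hc.
  apply T_eq in HS; destruct HS as [h | [h | h]]; [| exfalso | blia].
  - replace (fun x => f (set1 x) <> 1) with (fun _ : X => True); [exact full_value_of_empty_pos |].
    apply set_ext; intro x; specialize (h x); tauto.
  - destruct f_onto0 as [A HA].
    assert (HA_open : T A) by (apply open_of_points; intros x _; exact (h x)).
    apply T_eq in HA_open; destruct HA_open as [h' | [h' | h']]; [| | blia].
    + destruct (inhabited_of_neq_empty f A) as [x Ax]; [lia | exact (h' x Ax)].
    + destruct (not_full_of_neq_full f A) as [x nAx];
        [rewrite full_value_of_empty_pos; blia | exact (nAx (h' x))].
Qed.

Lemma two_nonopen_points :
  exists a b, a <> b /\ forall x, f (set1 x) <> 1 <-> x = a \/ x = b.
Proof.
  apply (modular_two_points f f_modular); [exact antitone_of_empty_pos | |].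
  - rewrite f_empty; exact value_of_nonopen_points.
  - intros x hx; rewrite f_empty.
    destruct (point_value_nonneg x) as [h | h]; [exact h | exact (False_ind _ (hx h))].
Qed.

Lemma form3_of_empty_value_pos : form3 T.
Proof.
  destruct two_nonopen_points as [a [b [hab Hab]]].
  exists a, b; split; [exact hab |].
  apply trivialU_ext with (1 := T_eq); intro U; split.
  - intros HU x Ux.
    assert (Hx : f (set1 x) = 1)
      by (pose proof (antitone_of_empty_pos _ _ (set1_sub U x Ux));
          pose proof (f_ternary (set1 x)); blia).
    split; intros e; subst x;
      [exact (proj2 (Hab a) (or_introl eq_refl) Hx) | exact (proj2 (Hab b) (or_intror eq_refl) Hx)].
  - intros HU.
    assert (HT : T U).
    { apply open_of_points; intros x Ux; apply NNPP; intros hx.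
      destruct (HU x Ux) as [na nb]; destruct (proj1 (Hab x) hx); tauto. }
    apply T_eq in HT; destruct HT as [h | [h | h]]; [| exfalso | exact h].
    + replace U with (fun _ : X => False); [exact f_empty |].
      apply set_ext; intro x; specialize (h x); tauto.
    + exact (proj1 (HU a (h a)) eq_refl).
Qed.

End EmptyValuePos.

Lemma forms_of_onto :
  (exists A, f A = -1) -> (exists A, f A = 0) -> (exists A, f A = 1) ->
  form1 T \/ form2 T \/ form3 T.
Proof.
  intros Hn Hz Hp; destruct (f_ternary set0) as [h | [h | h]].
  - destruct (classic (exists a, f (set1 a) = 0)) as [[a Ha] | Hno].
    + left; exact (form1_of_point_value0 h Hp a Ha).
    + right; left; apply (form2_of_no_point_value0 h Hp); [intros x hx; eauto | exact Hz].
  - left; exact (form1_of_empty_value0 h Hn Hp).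
  - right; right; exact (form3_of_empty_value_pos h Hn Hz).
Qed.

End Classification.

Lemma forms_of_realizes {X : Type} (T : (X -> Prop) -> Prop) f :
  is_topology T -> realizes T f -> form1 T \/ form2 T \/ form3 T.
Proof.
  intros HT (Hr & Hn & Hz & Hp & Hm & HTf); exact (forms_of_onto T f HT Hr Hm HTf Hn Hz Hp).
Qed.

Lemma realizes_of_forms {X : Type} (T : (X -> Prop) -> Prop) :
  form1 T \/ form2 T \/ form3 T -> exists f, realizes T f.
Proof.
  intros [(a & F' & HF & [HT | HT])
         | [(A & F' & F'' & HF1 & _ & HF2 & _ & HT) | (a & b & hab & HT)]].
  - exact (realizes_form1_filter T a F' HF HT).
  - exact (realizes_form1_point T a F' HF HT).
  - exact (realizes_form2 T A F' F'' HF1 HF2 HT).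
  - exact (realizes_form3 T a b hab HT).
Qed.

Lemma realizes_opp {X : Type} (T : (X -> Prop) -> Prop) f :
  ternary f -> (exists A, f A = -1) -> (exists A, f A = 0) -> (exists A, f A = 1) ->
  modular f -> trivialU T (fun U => f U = -1) -> realizes T (fun A => - f A).
Proof.
  intros Hr [A HA] [B HB] [C HC] Hm HT.
  split; [| split; [exists C | split; [exists B | split; [exists A | split]]]]; try lia.
  - intros D; pose proof (Hr D); lia.
  - intros D E; pose proof (Hm D E); lia.
  - apply trivialU_ext with (1 := HT); intro U; lia.
Qed.

Theorem theorem3 (X : Type) (T : (X -> Prop) -> Prop) (HT : is_topology T) :
  (exists f : (X -> Prop) -> Z,
      (forall A, f A = -1 \/ f A = 0 \/ f A = 1) /\
      (exists A, f A = -1) /\ (exists A, f A = 0) /\ (exists A, f A = 1) /\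
      (forall A B, f A + f B = f (union A B) + f (inter A B)) /\
      ((forall U, T U <-> set_empty U \/ set_full U \/ f U = 1) \/
       (forall U, T U <-> set_empty U \/ set_full U \/ f U = -1)))
  <->
  ((* Form 1 *)
   (exists (a : X) (F' : (X -> Prop) -> Prop),
      ultrafilter_on (fun x => x <> a) F' /\
      ((forall U, T U <-> set_empty U \/ set_full U \/ F' U) \/
       (forall U, T U <-> set_empty U \/ set_full U \/
          exists F, F' F /\ set_eq U (union (fun x => x = a) F))))
   \/
   (* Form 2 *)
   (exists (A : X -> Prop) (F' F'' : (X -> Prop) -> Prop),
      ultrafilter_on A F' /\ free_family F' /\
      ultrafilter_on (fun x => ~ A x) F'' /\ free_family F'' /\
      (forall U, T U <-> set_empty U \/ set_full U \/
         exists G H, F' G /\ F'' H /\ set_eq U (union G H)))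
   \/
   (* Form 3 *)
   (exists a b : X, a <> b /\
      (forall U, T U <-> set_empty U \/ set_full U \/
         subset U (fun x => x <> a /\ x <> b)))).
Proof.
  split.
  - intros (f & Hr & Hn & Hz & Hp & Hm & [HTf | HTf]).
    + apply (forms_of_realizes T f HT).
      exact (conj Hr (conj Hn (conj Hz (conj Hp (conj Hm HTf))))).
    + exact (forms_of_realizes T _ HT (realizes_opp T f Hr Hn Hz Hp Hm HTf)).
  - intros Hforms; destruct (realizes_of_forms T Hforms) as (f & Hr & Hn & Hz & Hp & Hm & HTf).
    exists f; repeat (split; [assumption |]); left; exact HTf.
Qed.
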